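(* In a dynamic network congestion game, a strategy profile is a subgame-perfect equilibrium if, and only if, it is a very-weak subgame-perfect equilibrium.
   Context: An arena is $\mathcal A=(V,E,\mathsf{src},\mathsf{tgt})$ with $V$ finite, $E$ a partial function from $V\times V$ to non-decreasing piecewise-affine functions $\mathbb N\to\mathbb N$ (edge $e$ has cost function $\ell_e$); $\mathsf{tgt}$ has only a self-loop of constant cost $0$ and is reachable from every state. In the dynamic NCG $(\mathcal A,n)$, players $[n]$ start in $\mathsf{src}$; configurations are maps $[n]\to V$; in each step each player simultaneously picks an edge leaving their current state, moves along it and pays $\ell_e(u)$, $u$ being the number of players using edge $e$ in that step. A history is a finite sequence of such steps; a strategy maps histories to edges leaving the player's current state. For a profile $\sigma$ and a history $h$, the residual profile $\sigma^h$ (played from the last configuration of $h$) is given by $\sigma^h_i(h')=\sigma_i(h\cdot h')$; $\mathrm{cost}_i$ of a profile is player $i$'s total payment along its outcome until reaching $\mathsf{tgt}$ ($+\infty$ if never). A Nash equilibrium is a profile in which no player can lower their cost by a unilateral change of strategy; a subgame-perfect equilibrium is a profile $\sigma$ such that $\sigma^h$ is a Nash equilibrium for every history $h$. A strategy $\sigma'_i$ is first-shot deviating from $\sigma_i$ if they coincide on all histories except the empty (trivial) history. A profile $\sigma$ is a very-weak Nash equilibrium if for every player $i$ and every $\sigma'_i$ first-shot deviating from $\sigma_i$, $\mathrm{cost}_i(\langle\sigma_{-i},\sigma'_i\rangle)\ge\mathrm{cost}_i(\sigma)$. A very-weak subgame-perfect equilibrium is a profile $\sigma$ such that $\sigma^h$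 is a very-weak Nash equilibrium for every history $h$. *)

From mathcomp Require Import all_boot all_order all_algebra.
From Stdlib Require Import ClassicalEpsilon.
Set Implicit Arguments. Unset Strict Implicit. Unset Printing Implicit Defensive.
Import GRing.Theory Num.Theory.

Section NCG.
Variable V : finType.
(* E u v = Some l : there is an edge (u,v) with cost function l. *)
Variable E : V -> V -> option (nat -> nat).
Variables src tgt : V.

Definition nondecreasing_fun (f : nat -> nat) : Prop :=
  forall x y, (x <= y)%N -> (f x <= f y)%N.

(* Piecewise affine with finitely many pieces: the breakpoints s cut N into
   finitely many intervals; on the k-th interval f is x |-> a k * x + b k. *)
Definition piecewise_affine (f : nat -> nat) : Prop :=
  exists (s : seq nat) (a b : nat -> int),
    forall x : nat, let k := count (fun t => (t <= x)%N) s in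
      ((f x)%:Z = a k * x%:Z + b k)%R.

Definition edge_rel : rel V := fun u v => E u v.

Definition is_arena : Prop :=
  (forall u v l, E u v = Some l -> nondecreasing_fun l /\ piecewise_affine l) /\
  (forall v, isSome (E tgt v) = (v == tgt)) /\
  (exists l, E tgt tgt = Some l /\ forall x, l x = 0%N) /\
  (forall u, connect edge_rel u tgt).

Variable n : nat.

Definition edge := (V * V)%type.
Definition is_edge (e : edge) : bool := isSome (E e.1 e.2).
Definition config := {ffun 'I_n -> V}.
Definition step := {ffun 'I_n -> edge}.
Definition history := seq step.

Definition after_step (s : step) : config := [ffun i => (s i).2].
Definition cur (c : config) (h : history) : config :=
  foldl (fun _ s => after_step s) c h.

Definition valid_step (c : config) (s : step) : Prop :=
  forall i, (s i).1 = c i /\ is_edge (s i).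

Fixpoint valid_hist (c : config) (h : history) : Prop :=
  match h with
  | [::] => True
  | s :: h' => valid_step c s /\ valid_hist (after_step s) h'
  end.

Definition strategy := history -> edge.
Definition profile := 'I_n -> strategy.

Definition valid_strategy (c : config) (i : 'I_n) (st : strategy) : Prop :=
  forall h, valid_hist c h -> (st h).1 = cur c h i /\ is_edge (st h).

Definition valid_profile (c : config) (sg : profile) : Prop :=
  forall i, valid_strategy c i (sg i).

Definition upd (sg : profile) (i : 'I_n) (st : strategy) : profile :=
  fun j => if j == i then st else sg j.

Definition residual (sg : profile) (h : history) : profile :=
  fun i h' => sg i (h ++ h').

Definition next_step (sg : profile) (h : history) : step := [ffun i => sg i h].

Fixpoint play (sg : profile) (k : nat) : history :=
  match k with
  | 0 => [::]
  | k'.+1 => rcons (play sg k') (next_step sg (play sg k'))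
  end.

Definition load (s : step) (e : edge) : nat := #|[set j | s j == e]|.

Definition pay (sg : profile) (i : 'I_n) (k : nat) : nat :=
  let s := next_step sg (play sg k) in
  match E (s i).1 (s i).2 with
  | Some l => l (load s (s i))
  | None => 0%N
  end.

Definition reached (c : config) (sg : profile) (i : 'I_n) : pred nat :=
  fun k => cur c (play sg k) i == tgt.

(* None stands for +infinity *)
Definition cost (c : config) (sg : profile) (i : 'I_n) : option nat :=
  match excluded_middle_informative (exists k, reached c sg i k) with
  | left H => Some (\sum_(k < ex_minn H) pay sg i k)%N
  | right _ => None
  end.

Definition cost_le (x y : option nat) : Prop :=
  match y, x with
  | None, _ => True
  | Some b, Some a => (a <= b)%N
  | Some _, None => False
  end.

Definition is_NE (c : config) (sg : profile) : Prop :=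
  forall i st, valid_strategy c i st -> cost_le (cost c sg i) (cost c (upd sg i st) i).

Definition first_shot_deviating (c : config) (st' st : strategy) : Prop :=
  forall h, valid_hist c h -> h <> [::] -> st' h = st h.

Definition is_vwNE (c : config) (sg : profile) : Prop :=
  forall i st, valid_strategy c i st -> first_shot_deviating c st (sg i) ->
    cost_le (cost c sg i) (cost c (upd sg i st) i).

Definition src_config : config := [ffun _ => src].

Definition is_SPE (sg : profile) : Prop :=
  forall h, valid_hist src_config h -> is_NE (cur src_config h) (residual sg h).

Definition is_vwSPE (sg : profile) : Prop :=
  forall h, valid_hist src_config h -> is_vwNE (cur src_config h) (residual sg h).

End NCG.

From mathcomp Require Import all_boot all_order all_algebra.
From Stdlib Require Import ClassicalEpsilon FunctionalExtensionality.
Set Implicit Arguments. Unset Strict Implicit. Unset Printing Implicit Defensive.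

(* One-shot deviation principle.  A deviation of player i with finite cost
   reaches tgt after some number m of steps.  It splits into its first move,
   followed by the profile, and a deviation in the subgame after that move,
   reaching tgt in m - 1 steps.  The first part is a first-shot deviation, so
   it does not beat the profile; costs add up along the first step, and the
   second part does not beat the profile in the subgame by induction on m.
   A deviation that never reaches tgt has cost +oo and cannot be profitable. *)

Section OneShotDeviation.
Variables (V : finType) (E : V -> V -> option (nat -> nat)) (tgt : V) (n : nat).
Implicit Types (c : config V n) (P : profile V n) (st : strategy V n)
  (g h : history V n) (s : step V n).

Lemma cost_le_trans x y z : cost_le x y -> cost_le y z -> cost_le x z.
Proof. by case: z => [z|] //; case: y => [y|] //; case: x => [x|] //; apply: leq_trans. Qed.

Lemma cost_le_addn a x y : cost_le x y -> cost_le (omap (addn a) x) (omap (addn a) y).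
Proof. by case: y => [y|] //; case: x => [x|] //=; rewrite leq_add2l. Qed.

Lemma cur_cat c g h : cur c (g ++ h) = cur (cur c g) h.
Proof. by rewrite /cur foldl_cat. Qed.

Lemma valid_hist_cat c g h :
  valid_hist E c (g ++ h) <-> valid_hist E c g /\ valid_hist E (cur c g) h.
Proof. by elim: g c => [|s g IH] c /=; rewrite ?IH; tauto. Qed.

Lemma residual_cat P g h : residual (residual P g) h = residual P (g ++ h).
Proof.
by apply: functional_extensionality => i; apply: functional_extensionality => h'; rewrite /residual catA.
Qed.

Lemma residual_upd P i st g :
  residual (upd P i st) g = upd (residual P g) i (fun h => st (g ++ h)).
Proof. by apply: functional_extensionality => j; rewrite /residual /upd; case: eqP. Qed.

Lemma upd_id P i : upd P i (P i) = P.
Proof. by apply: functional_extensionality => j; rewrite /upd; case: eqP => [->|]. Qed.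

Lemma valid_profile_upd c P i st :
  valid_profile E c P -> valid_strategy E c i st -> valid_profile E c (upd P i st).
Proof. by move=> HP Hst j; rewrite /upd; case: eqP => [->|]. Qed.

Lemma valid_profile_residual c P h :
  valid_profile E c P -> valid_hist E c h -> valid_profile E (cur c h) (residual P h).
Proof.
move=> HP Hh i h' Hh'; rewrite /residual -cur_cat.
by apply: HP; apply/valid_hist_cat.
Qed.

Lemma valid_step_next c P : valid_profile E c P -> valid_step E c (next_step P [::]).
Proof. by move=> HP i; rewrite ffunE; apply: HP. Qed.

Lemma playS_residual P k :
  play P k.+1 = next_step P [::] :: play (residual P [:: next_step P [::]]) k.
Proof.
elim: k => [|k IH] //.
rewrite -[play P k.+2]/(rcons (play P k.+1) (next_step P (play P k.+1))) IH rcons_cons.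
by congr (_ :: rcons _ _); apply/ffunP => j; rewrite !ffunE.
Qed.

Lemma pay_residual P i k :
  pay E P i k.+1 = pay E (residual P [:: next_step P [::]]) i k.
Proof.
have Hnext : next_step P (play P k.+1) =
    next_step (residual P [:: next_step P [::]]) (play (residual P [:: next_step P [::]]) k).
  by rewrite playS_residual; apply/ffunP => j; rewrite !ffunE.
by rewrite /pay Hnext.
Qed.

Lemma reached_residual c P i k :
  reached tgt c P i k.+1 =
  reached tgt (after_step (next_step P [::])) (residual P [:: next_step P [::]]) i k.
Proof. by rewrite /reached playS_residual. Qed.

Lemma cost_reached c P i m :
  reached tgt c P i m -> (forall k, k < m -> ~~ reached tgt c P i k) ->
  cost E tgt c P i = Some (\sum_(k < m) pay E P i k).
Proof.
move=> Hm Hmin; rewrite /cost; case: excluded_middle_informative => [H|[]]; last by exists m.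
case: ex_minnP => m' Hm' Hmin'; suff -> : m' = m by [].
apply/eqP; rewrite eqn_leq Hmin' //= leqNgt; apply/negP => /Hmin.
by rewrite Hm'.
Qed.

Lemma cost_unreached c P i :
  (forall k, ~~ reached tgt c P i k) -> cost E tgt c P i = None.
Proof. by move=> H; rewrite /cost; case: excluded_middle_informative => // -[k Hk]; case/negP: (H k). Qed.

Lemma cost_tgt c P i : c i == tgt -> cost E tgt c P i = Some 0.
Proof. by move=> Hci; rewrite (@cost_reached _ _ _ 0) ?big_ord0. Qed.

Lemma cost_step c P i : c i != tgt ->
  cost E tgt c P i = omap (addn (pay E P i 0))
    (cost E tgt (after_step (next_step P [::])) (residual P [:: next_step P [::]]) i).
Proof.
move=> Hci; set c' := after_step _; set P' := residual _ _.
have [Hex|Hno] := excluded_middle_informative (exists k, reached tgt c' P' i k).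
- case: (ex_minnP Hex) => m Hm Hmin.
  have Hbefore k : k < m -> ~~ reached tgt c' P' i k.
    by rewrite ltnNge; apply: contra => /Hmin.
  rewrite (cost_reached Hm Hbefore) (@cost_reached _ _ _ m.+1) ?reached_residual //.
    by rewrite /= big_ord_recl; congr (Some (_ + _)); apply: eq_bigr => k _; rewrite pay_residual.
  by case=> // k; rewrite ltnS reached_residual; apply: Hbefore.
- have Hnever k : ~~ reached tgt c' P' i k by apply/negP => Hk; apply: Hno; exists k.
  by rewrite !cost_unreached // => -[|k] //; rewrite reached_residual.
Qed.

Lemma NE_vwNE c P : is_NE E tgt c P -> is_vwNE E tgt c P.
Proof. by move=> HNE i st Hst _; apply: HNE. Qed.

Definition is_vwSPE_from c P : Prop :=
  forall h, valid_hist E c h -> is_vwNE E tgt (cur c h) (residual P h).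

Lemma vwSPE_from_residual c P h :
  is_vwSPE_from c P -> valid_hist E c h -> is_vwSPE_from (cur c h) (residual P h).
Proof.
move=> HP Hh h' Hh'; rewrite residual_cat -cur_cat.
by apply: HP; apply/valid_hist_cat.
Qed.

Definition first_move (e : edge V) st : strategy V n :=
  fun h => if h is [::] then e else st h.

Lemma valid_first_move c i st e :
  valid_strategy E c i st -> e.1 = c i /\ is_edge E e ->
  valid_strategy E c i (first_move e st).
Proof. by move=> Hst He [|s h] //; apply: Hst. Qed.

Lemma first_move_first_shot c e st : first_shot_deviating E c (first_move e st) st.
Proof. by case. Qed.

Lemma vwSPE_from_cost_le m c P i st :
  valid_profile E c P -> is_vwSPE_from c P -> valid_strategy E c i st ->
  reached tgt c (upd P i st) i m ->
  cost_le (cost E tgt c P i) (cost E tgt c (upd P i st) i).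
Proof.
elim: m c P st => [|m IH] c P st HP Hvw Hst Hm.
  by rewrite !cost_tgt.
have [Hci|Hci] := boolP (c i == tgt); first by rewrite !cost_tgt.
set s0 := next_step (upd P i st) [::].
set st1 := first_move (st [::]) (P i).
have Hs0 : valid_step E c s0 by apply/valid_step_next/valid_profile_upd.
have Hnext1 : next_step (upd P i st1) [::] = s0.
  by apply/ffunP => j; rewrite !ffunE /upd; case: eqP.
have Hst1 : valid_strategy E c i st1 by apply: valid_first_move; [apply: HP | apply: Hst].
have Hc' : after_step s0 = cur c [:: s0] by [].
have Hs0_hist : valid_hist E c [:: s0] by split.
have Hfirst : cost_le (cost E tgt c P i) (cost E tgt c (upd P i st1) i).
  exact: (Hvw [::] I i st1 Hst1 (first_move_first_shot _ _)).
apply: (cost_le_trans Hfirst).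
rewrite (cost_step (upd P i st) Hci) (cost_step (upd P i st1) Hci) Hnext1 -/s0.
have -> : pay E (upd P i st1) i 0 = pay E (upd P i st) i 0 by rewrite /pay /= Hnext1.
apply: cost_le_addn.
rewrite !residual_upd upd_id Hc'.
apply: IH.
- exact: valid_profile_residual.
- exact: vwSPE_from_residual.
- by move=> h Hh; apply: (Hst (s0 :: h)).
- by rewrite -Hc' -residual_upd -(reached_residual c).
Qed.

Lemma vwSPE_from_NE c P :
  valid_profile E c P -> is_vwSPE_from c P -> is_NE E tgt c P.
Proof.
move=> HP Hvw i st Hst.
have [[m Hm]|Hno] := excluded_middle_informative (exists k, reached tgt c (upd P i st) i k).
  exact: vwSPE_from_cost_le Hm.
by rewrite (@cost_unreached _ (upd P i st)) // => k; apply/negP => Hk; apply: Hno; exists k.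
Qed.

End OneShotDeviation.

Theorem theoremC3 (V : finType) (E : V -> V -> option (nat -> nat)) (src tgt : V)
  (HA : is_arena E tgt) (n : nat) (sg : profile V n)
  (Hsg : valid_profile E (src_config src n) sg) :
  is_SPE E src tgt sg <-> is_vwSPE E src tgt sg.
Proof.
split=> [HSPE h Hh | Hvw h Hh]; first exact/NE_vwNE/HSPE.
apply: vwSPE_from_NE; first exact: valid_profile_residual.
exact: (vwSPE_from_residual (c := src_config src n)).
Qed.
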